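(* If $w\in\{[4123],[2341]\}\subseteq S_4$, then there is no $x\in\mathfrak{sl}_4(\mathbb C)$ and Hessenberg space $H\subseteq\mathfrak{sl}_4(\mathbb C)$ such that $\mathcal B(x,H)=X_{w^{-1}}$ in $SL_4(\mathbb C)/B$.
   Context: $B$ is the Borel subgroup of upper triangular matrices in $SL_4(\mathbb C)$, with Lie algebra $\mathfrak b$. Permutations are in one-line notation; $\dot w$ is a scalar multiple in $SL_4(\mathbb C)$ of the permutation matrix with $e_i\mapsto e_{w(i)}$; $X_w$ is the closure of $B\dot wB/B$. A Hessenberg space is a subspace $H\subseteq\mathfrak{sl}_4(\mathbb C)$ with $[\mathfrak b,H]\subseteq H$; $\mathcal B(x,H)=\{gB: g^{-1}xg\in H\}$. *)

From HB Require Import structures.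
From mathcomp Require Import all_boot all_order all_algebra all_fingroup.
From mathcomp Require Import Rstruct.
From mathcomp Require Import complex.
From Stdlib Require Rdefinitions.

Set Implicit Arguments.
Unset Strict Implicit.
Unset Printing Implicit Defensive.

Import GRing.Theory.
Local Open Scope ring_scope.

Definition CC : fieldType := (Rdefinitions.R)[i].

Notation "''M4'" := ('M[CC]_4) (at level 0).

Definition inSL (g : 'M4) : Prop := \det g = 1.

Definition in_sl (x : 'M4) : Prop := \tr x = 0.

Definition upper (A : 'M4) : Prop := forall i j : 'I_4, (nat_of_ord j < nat_of_ord i)%N -> A i j = 0.

Definition inB (b : 'M4) : Prop := upper b /\ inSL b.

Definition in_borel_alg (y : 'M4) : Prop := upper y /\ in_sl y.

(* permutation matrix of w : e_i |-> e_{w(i)}, i.e. entry (w j, j) is 1 *)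
Definition perm_matrix (w : 'S_4) : 'M4 := \matrix_(i, j) ((i == w j)%:R).

Definition is_dot (w : 'S_4) (wd : 'M4) : Prop :=
  inSL wd /\ exists c : CC, wd = c *: perm_matrix w.

Definition bruhat_cell (w : 'S_4) (g : 'M4) : Prop :=
  exists b1 b2 wd, inB b1 /\ inB b2 /\ is_dot w wd /\ g = b1 *m wd *m b2.

Inductive polyfun : ('M4 -> CC) -> Prop :=
| polyfun_const (c : CC) : polyfun (fun _ => c)
| polyfun_coord (i j : 'I_4) : polyfun (fun A => A i j)
| polyfun_add f g : polyfun f -> polyfun g -> polyfun (fun A => f A + g A)
| polyfun_mul f g : polyfun f -> polyfun g -> polyfun (fun A => f A * g A).

Definition zclosure (S : 'M4 -> Prop) (g : 'M4) : Prop :=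
  forall f, polyfun f -> (forall h, S h -> f h = 0) -> f g = 0.

(* X_w, described by its preimage in SL_4(C): g B lies in X_w iff
   g lies in the closure of B dot(w) B (SL_4 is Zariski closed in M_4 and
   SL_4 -> SL_4/B is open, so this is the preimage of the closure). *)
Definition in_schubert (w : 'S_4) (g : 'M4) : Prop :=
  inSL g /\ zclosure (bruhat_cell w) g.

Definition hessenberg_space (H : {vspace 'M4}) : Prop :=
  (forall h, h \in H -> in_sl h) /\
  (forall y h, in_borel_alg y -> h \in H -> y *m h - h *m y \in H).

(* preimage in SL_4 of the Hessenberg variety B(x,H) *)
Definition in_hess (x : 'M4) (H : {vspace 'M4}) (g : 'M4) : Prop :=
  inSL g /\ invmx g *m x *m g \in H.

Definition oneline (w : 'S_4) : seq nat := [seq (val (w i)).+1 | i <- enum 'I_4].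

From HB Require Import structures.
From mathcomp Require Import all_boot all_order all_algebra all_fingroup.
From mathcomp Require Import Rstruct complex ring.
From Stdlib Require Import FunctionalExtensionality.

Set Implicit Arguments.
Unset Strict Implicit.
Unset Printing Implicit Defensive.

Import GRing.Theory Num.Theory.
Local Open Scope ring_scope.

(* Suppose that B(x, H) = X_u, where u = w^-1 is 2341 or 4123.  Certain signed permutation
   matrices P lie in X_u, each being the value at t = 0 of an explicit polynomial curve that
   lies in the open cell B u B for t <> 0; hence P^T x P lies in H.  Being stable under ad h
   for a regular diagonal h in b, the space H is the sum of its intersections with the root
   spaces and with the diagonal: every nonzero off-diagonal entry (i, j) of an element of H
   puts E_ij in H, and the diagonal part of an element of H lies in H.  Brackets with the root
   vectors of b then propagate such an E_ij through a large part of sl_4.  Whichever entries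
   of x vanish, this produces some g in SL_4 with g^-1 x g in H although g violates an
   equation of X_u (a vanishing entry for 2341, a vanishing 2 x 2 minor for 4123). *)

Definition o0 : 'I_4 := @Ordinal 4 0 isT.
Definition o1 : 'I_4 := @Ordinal 4 1 isT.
Definition o2 : 'I_4 := @Ordinal 4 2 isT.
Definition o3 : 'I_4 := @Ordinal 4 3 isT.

Ltac ord4 r := case: r => [[|[|[|[|//]]]] ?].

Lemma sum_ord4 (F : 'I_4 -> CC) : \sum_(k < 4) F k = F o0 + F o1 + F o2 + F o3.
Proof.
rewrite !big_ord_recr big_ord0 /= add0r.
by congr (F _ + F _ + F _ + F _); apply: val_inj.
Qed.

Lemma prod_ord4 (F : 'I_4 -> CC) : \prod_(k < 4) F k = F o0 * F o1 * F o2 * F o3.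
Proof.
rewrite !big_ord_recr big_ord0 /= mul1r.
by congr (F _ * F _ * F _ * F _); apply: val_inj.
Qed.

Definition mx4 (a b c d e f g h i j k l m n o p : CC) : 'M4 :=
  \matrix_(r, s)
    nth 0 (nth [::] [:: [:: a; b; c; d]; [:: e; f; g; h]; [:: i; j; k; l]; [:: m; n; o; p]] r) s.

Lemma mx4E a11 a12 a13 a14 a21 a22 a23 a24 a31 a32 a33 a34 a41 a42 a43 a44 i j :
  mx4 a11 a12 a13 a14 a21 a22 a23 a24 a31 a32 a33 a34 a41 a42 a43 a44 i j =
  nth 0 (nth [::] [:: [:: a11; a12; a13; a14]; [:: a21; a22; a23; a24];
                      [:: a31; a32; a33; a34]; [:: a41; a42; a43; a44]] i) j.
Proof. by rewrite mxE. Qed.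

Lemma mx4_eta (A : 'M4) : A = mx4
  (A o0 o0) (A o0 o1) (A o0 o2) (A o0 o3) (A o1 o0) (A o1 o1) (A o1 o2) (A o1 o3)
  (A o2 o0) (A o2 o1) (A o2 o2) (A o2 o3) (A o3 o0) (A o3 o1) (A o3 o2) (A o3 o3).
Proof. by apply/matrixP => r s; rewrite mxE; ord4 r; ord4 s; congr (A _ _); apply: val_inj. Qed.

Lemma mul_mx4
    a11 a12 a13 a14 a21 a22 a23 a24 a31 a32 a33 a34 a41 a42 a43 a44
    b11 b12 b13 b14 b21 b22 b23 b24 b31 b32 b33 b34 b41 b42 b43 b44 :
  mx4 a11 a12 a13 a14 a21 a22 a23 a24 a31 a32 a33 a34 a41 a42 a43 a44 *m
  mx4 b11 b12 b13 b14 b21 b22 b23 b24 b31 b32 b33 b34 b41 b42 b43 b44 = mx4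
  (a11*b11 + a12*b21 + a13*b31 + a14*b41) (a11*b12 + a12*b22 + a13*b32 + a14*b42)
  (a11*b13 + a12*b23 + a13*b33 + a14*b43) (a11*b14 + a12*b24 + a13*b34 + a14*b44)
  (a21*b11 + a22*b21 + a23*b31 + a24*b41) (a21*b12 + a22*b22 + a23*b32 + a24*b42)
  (a21*b13 + a22*b23 + a23*b33 + a24*b43) (a21*b14 + a22*b24 + a23*b34 + a24*b44)
  (a31*b11 + a32*b21 + a33*b31 + a34*b41) (a31*b12 + a32*b22 + a33*b32 + a34*b42)
  (a31*b13 + a32*b23 + a33*b33 + a34*b43) (a31*b14 + a32*b24 + a33*b34 + a34*b44)
  (a41*b11 + a42*b21 + a43*b31 + a44*b41) (a41*b12 + a42*b22 + a43*b32 + a44*b42)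
  (a41*b13 + a42*b23 + a43*b33 + a44*b43) (a41*b14 + a42*b24 + a43*b34 + a44*b44).
Proof. by apply/matrixP => r s; rewrite !mxE sum_ord4 !mxE; ord4 r; ord4 s. Qed.

Lemma add_mx4
    a11 a12 a13 a14 a21 a22 a23 a24 a31 a32 a33 a34 a41 a42 a43 a44
    b11 b12 b13 b14 b21 b22 b23 b24 b31 b32 b33 b34 b41 b42 b43 b44 :
  mx4 a11 a12 a13 a14 a21 a22 a23 a24 a31 a32 a33 a34 a41 a42 a43 a44 +
  mx4 b11 b12 b13 b14 b21 b22 b23 b24 b31 b32 b33 b34 b41 b42 b43 b44 = mx4
  (a11+b11) (a12+b12) (a13+b13) (a14+b14) (a21+b21) (a22+b22) (a23+b23) (a24+b24)
  (a31+b31) (a32+b32) (a33+b33) (a34+b34) (a41+b41) (a42+b42) (a43+b43) (a44+b44).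
Proof. by apply/matrixP => r s; rewrite !mxE; ord4 r; ord4 s. Qed.

Lemma scale_mx4 (z : CC) a11 a12 a13 a14 a21 a22 a23 a24 a31 a32 a33 a34 a41 a42 a43 a44 :
  z *: mx4 a11 a12 a13 a14 a21 a22 a23 a24 a31 a32 a33 a34 a41 a42 a43 a44 = mx4
  (z*a11) (z*a12) (z*a13) (z*a14) (z*a21) (z*a22) (z*a23) (z*a24)
  (z*a31) (z*a32) (z*a33) (z*a34) (z*a41) (z*a42) (z*a43) (z*a44).
Proof. by apply/matrixP => r s; rewrite !mxE; ord4 r; ord4 s. Qed.

Lemma opp_mx4 a11 a12 a13 a14 a21 a22 a23 a24 a31 a32 a33 a34 a41 a42 a43 a44 :
  - mx4 a11 a12 a13 a14 a21 a22 a23 a24 a31 a32 a33 a34 a41 a42 a43 a44 = mx4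
  (-a11) (-a12) (-a13) (-a14) (-a21) (-a22) (-a23) (-a24)
  (-a31) (-a32) (-a33) (-a34) (-a41) (-a42) (-a43) (-a44).
Proof. by apply/matrixP => r s; rewrite !mxE; ord4 r; ord4 s. Qed.

Lemma trmx_mx4 a11 a12 a13 a14 a21 a22 a23 a24 a31 a32 a33 a34 a41 a42 a43 a44 :
  (mx4 a11 a12 a13 a14 a21 a22 a23 a24 a31 a32 a33 a34 a41 a42 a43 a44)^T =
  mx4 a11 a21 a31 a41 a12 a22 a32 a42 a13 a23 a33 a43 a14 a24 a34 a44.
Proof. by apply/matrixP => r s; rewrite !mxE; ord4 r; ord4 s. Qed.

Lemma mx4_1 : (1%:M : 'M4) = mx4 1 0 0 0 0 1 0 0 0 0 1 0 0 0 0 1.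
Proof. by apply/matrixP => r s; rewrite !mxE; ord4 r; ord4 s. Qed.

Lemma mxtrace_mx4 a11 a12 a13 a14 a21 a22 a23 a24 a31 a32 a33 a34 a41 a42 a43 a44 :
  \tr (mx4 a11 a12 a13 a14 a21 a22 a23 a24 a31 a32 a33 a34 a41 a42 a43 a44) =
  a11 + a22 + a33 + a44.
Proof. by rewrite /mxtrace sum_ord4 !mxE. Qed.

Local Notation diag4 a b c d := (mx4 a 0 0 0 0 b 0 0 0 0 c 0 0 0 0 d).

Lemma diag_mx4 (A : 'M4) :
  diag_mx (\row_i A i i) = diag4 (A o0 o0) (A o1 o1) (A o2 o2) (A o3 o3).
Proof.
apply/matrixP => r s; rewrite !mxE; ord4 r; ord4 s => //=; rewrite ?mulr1n ?mulr0n //;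
  by congr (A _ _); apply: val_inj.
Qed.

Lemma upper_mx4 a b c d f g h k l p : upper (mx4 a b c d 0 f g h 0 0 k l 0 0 0 p).
Proof. by move=> i j; ord4 i; ord4 j; rewrite mxE. Qed.

Lemma upper_mx4_eta (A : 'M4) : upper A -> A = mx4
  (A o0 o0) (A o0 o1) (A o0 o2) (A o0 o3) 0 (A o1 o1) (A o1 o2) (A o1 o3)
  0 0 (A o2 o2) (A o2 o3) 0 0 0 (A o3 o3).
Proof.
move=> uA; apply/matrixP => r s; rewrite mxE.
have [lsr|] := ltnP s r; first by rewrite uA //; move: lsr; ord4 r; ord4 s.
by ord4 r; ord4 s => // _; congr (A _ _); apply: val_inj.
Qed.

Lemma det_mx4_upper a b c d f g h k l p :
  \det (mx4 a b c d 0 f g h 0 0 k l 0 0 0 p) = a * f * k * p.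
Proof.
rewrite -det_tr det_trig ?prod_ord4 ?mxE //.
by apply/forallP => i; apply/forallP => j; apply/implyP; rewrite !mxE; ord4 i; ord4 j.
Qed.

Lemma det_mx4_lower a e f i j k m n o p :
  \det (mx4 a 0 0 0 e f 0 0 i j k 0 m n o p) = a * f * k * p.
Proof.
rewrite det_trig ?prod_ord4 ?mxE //.
by apply/forallP => r; apply/forallP => s; apply/implyP; rewrite !mxE; ord4 r; ord4 s.
Qed.

Ltac mx4_ring := rewrite ?(mul_mx4, opp_mx4, scale_mx4, add_mx4); f_equal; ring.
Ltac mx4_field := rewrite ?(mul_mx4, opp_mx4, scale_mx4, add_mx4); f_equal; field.

(** * Polynomial functions and Zariski closure *)

Lemma polyfun_ext f g : f =1 g -> polyfun f -> polyfun g.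
Proof. by move=> /functional_extensionality ->. Qed.

Lemma polyfunB f g : polyfun f -> polyfun g -> polyfun (fun A => f A - g A).
Proof.
move=> pf pg; apply: (polyfun_ext (f := fun A => f A + (-1) * g A)); last by do !constructor.
by move=> A; rewrite mulN1r.
Qed.

Lemma polyfun_sum (I : Type) (r : seq I) (F : I -> 'M4 -> CC) :
  (forall i, polyfun (F i)) -> polyfun (fun A => \sum_(i <- r) F i A).
Proof.
move=> hF; elim: r => [|i r IH].
  by apply: (polyfun_ext (f := fun _ => 0)) => [A|]; [rewrite big_nil | constructor].
apply: (polyfun_ext (f := fun A => F i A + \sum_(j <- r) F j A)) => [A|].
  by rewrite big_cons.
by constructor.
Qed.

Lemma polyfun_prod (I : Type) (r : seq I) (F : I -> 'M4 -> CC) :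
  (forall i, polyfun (F i)) -> polyfun (fun A => \prod_(i <- r) F i A).
Proof.
move=> hF; elim: r => [|i r IH].
  by apply: (polyfun_ext (f := fun _ => 1)) => [A|]; [rewrite big_nil | constructor].
apply: (polyfun_ext (f := fun A => F i A * \prod_(j <- r) F j A)) => [A|].
  by rewrite big_cons.
by constructor.
Qed.

Lemma polyfun_det : polyfun (fun A : 'M4 => \det A).
Proof.
apply: polyfun_sum => s; constructor; first by constructor.
by apply: polyfun_prod => i; constructor.
Qed.

Lemma polyfun_mulmx f (b : 'M4) : polyfun f -> polyfun (fun A => f (b *m A)).
Proof.
elim=> [c|i j|f1 f2 _ h1 _ h2|f1 f2 _ h1 _ h2]; try by constructor.
apply: (polyfun_ext (f := fun A => \sum_(k <- index_enum 'I_4) b i k * A k j)).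
  by move=> A; rewrite mxE.
by apply: polyfun_sum => k; do !constructor.
Qed.

Definition poly_fun (f : CC -> CC) := exists p : {poly CC}, f =1 horner p.

Lemma poly_fun_ext f g : f =1 g -> poly_fun g -> poly_fun f.
Proof. by move=> e [p hp] ; exists p => t; rewrite e. Qed.

Lemma poly_fun_const c : poly_fun (fun _ => c).
Proof. by exists c%:P => t; rewrite hornerC. Qed.

Lemma poly_fun_id : poly_fun id.
Proof. by exists 'X => t; rewrite hornerX. Qed.

Lemma poly_funD f g : poly_fun f -> poly_fun g -> poly_fun (fun t => f t + g t).
Proof. by move=> [p hp] [q hq]; exists (p + q) => t; rewrite hornerD hp hq. Qed.

Lemma poly_funM f g : poly_fun f -> poly_fun g -> poly_fun (fun t => f t * g t).
Proof. by move=> [p hp] [q hq]; exists (p * q) => t; rewrite hornerM hp hq. Qed.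

Lemma poly_funN f : poly_fun f -> poly_fun (fun t => - f t).
Proof. by move=> [p hp]; exists (- p) => t; rewrite hornerN hp. Qed.

Ltac poly_fun := repeat first
  [ apply: poly_fun_id | apply: poly_fun_const | apply: poly_funD
  | apply: poly_funM | apply: poly_funN ].

Lemma poly_fun_mx4 (a11 a12 a13 a14 a21 a22 a23 a24 a31 a32 a33 a34 a41 a42 a43 a44 : CC -> CC) :
  poly_fun a11 -> poly_fun a12 -> poly_fun a13 -> poly_fun a14 ->
  poly_fun a21 -> poly_fun a22 -> poly_fun a23 -> poly_fun a24 ->
  poly_fun a31 -> poly_fun a32 -> poly_fun a33 -> poly_fun a34 ->
  poly_fun a41 -> poly_fun a42 -> poly_fun a43 -> poly_fun a44 ->
  forall i j, poly_fun (fun t => mx4 (a11 t) (a12 t) (a13 t) (a14 t) (a21 t) (a22 t) (a23 t)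
    (a24 t) (a31 t) (a32 t) (a33 t) (a34 t) (a41 t) (a42 t) (a43 t) (a44 t) i j).
Proof.
move=> p11 p12 p13 p14 p21 p22 p23 p24 p31 p32 p33 p34 p41 p42 p43 p44 i j.
apply: (poly_fun_ext (g := fun t => nth (fun _ => 0) (nth [::]
  [:: [:: a11; a12; a13; a14]; [:: a21; a22; a23; a24];
      [:: a31; a32; a33; a34]; [:: a41; a42; a43; a44]] i) j t)).
  by move=> t; rewrite mxE; ord4 i; ord4 j.
by ord4 i; ord4 j.
Qed.

Lemma poly_fun_polyfun_curve (f : 'M4 -> CC) (gam : CC -> 'M4) :
  polyfun f -> (forall i j, poly_fun (fun t => gam t i j)) -> poly_fun (f \o gam).
Proof.
move=> pf hg; elim: pf => [c|i j|f1 f2 _ h1 _ h2|f1 f2 _ h1 _ h2] /=.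
- exact: poly_fun_const.
- exact: hg.
- exact: poly_funD.
- exact: poly_funM.
Qed.

(* [q] vanishes at the [size p] distinct points 1, 2, ..., so [p = 0]. *)
Lemma poly_fun_eq0_at0 (q : CC -> CC) : poly_fun q -> (forall t, t != 0 -> q t = 0) -> q 0 = 0.
Proof.
move=> [p hp] hz; rewrite hp.
suff -> : p = 0 by rewrite horner0.
apply/eqP; apply: contraT => pn0.
pose rs := [seq (i.+1)%:R : CC | i <- iota 0 (size p)].
have := max_poly_roots pn0 (rs := rs).
rewrite size_map size_iota ltnn; apply.
  by apply/allP => t /mapP [i _ ->]; rewrite /root -hp hz // pnatr_eq0.
by rewrite map_inj_uniq ?iota_uniq // => i j /eqP; rewrite eqr_nat eqSS => /eqP.
Qed.

Lemma zclosure_curve (S : 'M4 -> Prop) (gam : CC -> 'M4) :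
  (forall i j, poly_fun (fun t => gam t i j)) -> (forall t, t != 0 -> S (gam t)) ->
  zclosure S (gam 0).
Proof.
move=> hg hS f pf hf.
apply: (poly_fun_eq0_at0 (q := f \o gam)); first exact: poly_fun_polyfun_curve.
by move=> t tn0; apply/hf/hS.
Qed.

(** * Hessenberg spaces are sums of root spaces *)

Lemma hess_bracket (H : {vspace 'M4}) y h r : hessenberg_space H -> in_borel_alg y ->
  h \in H -> y *m h - h *m y = r -> r \in H.
Proof. by move=> [_ hb] hy hh <-; apply: hb. Qed.

Lemma memvZ_cancel (H : {vspace 'M4}) c v : c != 0 -> c *: v \in H -> v \in H.
Proof. by move=> cn0; rewrite rpredZeq (negPf cn0). Qed.

(* The twelve differences of the weights (-5, -4, 1, 8) are pairwise distinct and nonzero,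
   so [ad hreg] separates all root spaces of sl_4. *)
Definition weight (i : 'I_4) : int := nth 0 [:: -5; -4; 1; 8]%Z i.
Definition root_value (i j : 'I_4) : int := weight i - weight j.
Definition root_values : seq int := [:: -13; -12; -7; -6; -5; -1; 0; 1; 5; 6; 7; 12; 13]%Z.
Definition hreg : 'M4 := diag_mx (\row_i (weight i)%:~R).

Lemma root_value_mem i j : root_value i j \in root_values.
Proof. by ord4 i; ord4 j. Qed.

Lemma root_value_inj i j a b : a != b -> root_value i j = root_value a b -> i = a /\ j = b.
Proof. by ord4 i; ord4 j; ord4 a; ord4 b => // _ _; split; apply: val_inj. Qed.

Lemma root_value_eq0 i j : (root_value i j == 0) = (i == j).
Proof. by ord4 i; ord4 j. Qed.

Lemma hreg_borel : in_borel_alg hreg.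
Proof.
split; first by move=> i j lji; rewrite mxE; case: eqP => // e; rewrite e ltnn in lji.
by rewrite /in_sl mxtrace_diag sum_ord4 !mxE /= -!rmorphD.
Qed.

Definition ad_shift (mu : int) (A : 'M4) : 'M4 := hreg *m A - A *m hreg - mu%:~R *: A.

Lemma ad_shiftE mu A i j : ad_shift mu A i j = (root_value i j - mu)%:~R * A i j.
Proof. by rewrite /ad_shift mul_diag_mx mul_mx_diag !mxE /root_value !rmorphB /=; ring. Qed.

Definition ad_shifts (ms : seq int) A := foldr ad_shift A ms.

Lemma ad_shiftsE ms A i j :
  ad_shifts ms A i j = (\prod_(mu <- ms) (root_value i j - mu))%:~R * A i j.
Proof.
elim: ms => [|mu ms IH] /=; first by rewrite big_nil mul1r.
by rewrite ad_shiftE IH big_cons rmorphM mulrA.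
Qed.

Lemma hess_ad_shifts (H : {vspace 'M4}) ms A :
  hessenberg_space H -> A \in H -> ad_shifts ms A \in H.
Proof.
move=> hH hA; elim: ms => //= mu ms IH.
by rewrite /ad_shift rpredB ?rpredZ //; apply: (hess_bracket hH hreg_borel IH).
Qed.

Lemma prod_subr_eq0 (ms : seq int) l : l \in ms -> \prod_(mu <- ms) (l - mu) = 0.
Proof. by move=> lms; apply/eqP; rewrite prodf_seq_eq0; apply/hasP; exists l; rewrite ?subrr. Qed.

Lemma prod_subr_neq0 (ms : seq int) l : l \notin ms -> \prod_(mu <- ms) (l - mu) != 0.
Proof.
move=> lms; rewrite prodf_seq_neq0; apply/allP => mu mums /=.
by rewrite subr_eq0; apply: contraNneq lms => ->.
Qed.

Lemma hess_root_component (H : {vspace 'M4}) A a b : hessenberg_space H -> A \in H ->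
  a != b -> A a b *: delta_mx a b \in H.
Proof.
move=> hH hA ab; pose ms := [seq mu <- root_values | mu != root_value a b].
pose c : CC := (\prod_(mu <- ms) (root_value a b - mu))%:~R.
have cn0 : c != 0 by rewrite intr_eq0 prod_subr_neq0 // mem_filter eqxx.
apply: (memvZ_cancel cn0).
suff -> : c *: (A a b *: delta_mx a b) = ad_shifts ms A by exact: hess_ad_shifts.
apply/matrixP => i j; rewrite ad_shiftsE !mxE.
have [/andP [/eqP -> /eqP ->]|nij] := boolP ((i == a) && (j == b)).
  by rewrite mulr1.
rewrite mulr0 mulr0 prod_subr_eq0 ?mul0r // mem_filter root_value_mem andbT.
by apply: contra nij => /eqP /(root_value_inj ab) [-> ->]; rewrite !eqxx.
Qed.

Lemma hess_diag_component (H : {vspace 'M4}) A : hessenberg_space H -> A \in H ->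
  diag_mx (\row_i A i i) \in H.
Proof.
move=> hH hA; pose ms := [seq mu <- root_values | mu != 0].
pose c : CC := (\prod_(mu <- ms) (0 - mu))%:~R.
have cn0 : c != 0 by rewrite intr_eq0 prod_subr_neq0 // mem_filter eqxx.
apply: (memvZ_cancel cn0).
suff -> : c *: diag_mx (\row_i A i i) = ad_shifts ms A by exact: hess_ad_shifts.
apply/matrixP => i j; rewrite ad_shiftsE !mxE.
have [->|nij] := eqVneq i j.
  by rewrite (eqP (_ : root_value j j == 0)) ?root_value_eq0 // mulr1n mulrC.
rewrite prod_subr_eq0 ?mulr0n ?mul0r ?mulr0 //.
by rewrite mem_filter root_value_mem root_value_eq0 nij.
Qed.

Lemma hess_diag_componentE (H : {vspace 'M4}) A D : hessenberg_space H -> A \in H ->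
  diag_mx (\row_i A i i) = D -> D \in H.
Proof. by move=> hH hA <-; apply: hess_diag_component. Qed.

(** * Bruhat cells and Schubert varieties *)

Lemma upper_mulmx (A B : 'M4) : upper A -> upper B -> upper (A *m B).
Proof.
move=> hA hB i j lji; rewrite mxE big1 // => k _.
have [lki|lik] := ltnP k i; first by rewrite hA // mul0r.
by rewrite hB ?mulr0 // (leq_trans lji lik).
Qed.

Lemma bruhat_cell_mulBl (u : 'S_4) b g : inB b -> bruhat_cell u g -> bruhat_cell u (b *m g).
Proof.
move=> [ub sb] [b1 [b2 [wd [[ub1 sb1] [hb2 [hwd ->]]]]]].
exists (b *m b1), b2, wd; split; first split.
- exact: upper_mulmx.
- by rewrite /inSL det_mulmx sb sb1 mulr1.
by rewrite !mulmxA.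
Qed.

(* The scalar in [is_dot] is a fourth root of [\det b1], which exists as [CC] is closed. *)
Lemma bruhat_cell_factor (u : 'S_4) b1 b2 : upper b1 -> upper b2 ->
  \det b1 * \det (perm_matrix u) = 1 -> \det b2 = 1 ->
  bruhat_cell u (b1 *m perm_matrix u *m b2).
Proof.
move=> ub1 ub2 db1 db2; pose c := 4.-root (\det b1).
have c4 : c ^+ 4 = \det b1 by rewrite rootCK.
have db1n0 : \det b1 != 0 by apply: contra_eq_neq db1 => ->; rewrite mul0r eq_sym oner_eq0.
have cn0 : c != 0 by rewrite rootC_eq0.
exists (c^-1 *: b1), b2, (c *: perm_matrix u); split; first split.
- by move=> i j lji; rewrite mxE ub1 // mulr0.
- by rewrite /inSL detZ exprVn c4 mulVf.
split=> //; split; first by split; [rewrite /inSL detZ c4 | exists c].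
by rewrite -scalemxAl -scalemxAr scalerA mulVf // scale1r.
Qed.

Lemma bruhat_cell_SL (u : 'S_4) g : bruhat_cell u g -> inSL g.
Proof.
move=> [b1 [b2 [wd [[_ sb1] [[_ sb2] [[swd _] ->]]]]]].
by rewrite /inSL !det_mulmx sb1 sb2 swd !mulr1.
Qed.

Lemma in_schubert_zclosure (u : 'S_4) g : zclosure (bruhat_cell u) g -> in_schubert u g.
Proof.
move=> hz; split=> //; apply/eqP; rewrite -subr_eq0; apply/eqP.
apply: (hz (fun A => \det A + (-1))); first by do !constructor; exact: polyfun_det.
by move=> A /bruhat_cell_SL ->; rewrite subrr.
Qed.

Lemma zclosure_cell_mulBl (u : 'S_4) b g :
  inB b -> zclosure (bruhat_cell u) g -> zclosure (bruhat_cell u) (b *m g).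
Proof.
move=> hb hz f pf hf; apply: (hz (fun A => f (b *m A))); first exact: polyfun_mulmx.
by move=> h /(bruhat_cell_mulBl hb); apply: hf.
Qed.

Lemma zclosure_cell_curve (u : 'S_4) P (gam b1 b2 : CC -> 'M4) : gam 0 = P ->
  (forall i j, poly_fun (fun t => gam t i j)) ->
  (forall t, t != 0 -> gam t = b1 t *m perm_matrix u *m b2 t) ->
  (forall t, t != 0 -> [/\ upper (b1 t), upper (b2 t),
     \det (b1 t) * \det (perm_matrix u) = 1 & \det (b2 t) = 1]) ->
  zclosure (bruhat_cell u) P.
Proof.
move=> <- hp he hb; apply: zclosure_curve => // t tn0; rewrite he //.
by have [? ? ? ?] := hb t tn0; apply: bruhat_cell_factor.
Qed.

Lemma invmx_right (A B : 'M4) : A *m B = 1%:M -> invmx A = B.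
Proof.
move=> AB; have [uA _] := mulmx1_unit AB.
by rewrite -[invmx A]mulmx1 -AB mulmxA mulVmx // mul1mx.
Qed.

Lemma mxtrace_conj (P Pi A : 'M4) : P *m Pi = 1%:M -> \tr (Pi *m A *m P) = \tr A.
Proof. by move=> hP; rewrite mxtrace_mulC mulmxA hP mul1mx. Qed.

Section HessenbergSchubert.

Variables (u : 'S_4) (x : 'M4) (H : {vspace 'M4}).
Hypothesis hess_schubert : forall g, in_hess x H g <-> in_schubert u g.

Lemma hess_of_zclosure P Pi :
  zclosure (bruhat_cell u) P -> P *m Pi = 1%:M -> Pi *m x *m P \in H.
Proof.
move=> hz hP; have [_] := proj2 (hess_schubert P) (in_schubert_zclosure hz).
by rewrite (invmx_right hP).
Qed.

Lemma not_hess_of_polyfun f P Pi : polyfun f -> (forall g, bruhat_cell u g -> f g = 0) ->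
  \det P = 1 -> P *m Pi = 1%:M -> f P != 0 -> Pi *m x *m P \notin H.
Proof.
move=> pf hf dP hP; apply: contraNN => hin.
have hP' : in_hess x H P by split=> //; rewrite (invmx_right hP).
have [_ hz] := proj1 (hess_schubert P) hP'.
by rewrite (hz f pf hf).
Qed.

End HessenbergSchubert.

(** * Root vectors in a Hessenberg space *)

Local Notation E := (@delta_mx CC 4 4).

Lemma delta_mx4 (i j : 'I_4) : E i j = mx4
  ((o0 == i) && (o0 == j))%:R ((o0 == i) && (o1 == j))%:R
  ((o0 == i) && (o2 == j))%:R ((o0 == i) && (o3 == j))%:R
  ((o1 == i) && (o0 == j))%:R ((o1 == i) && (o1 == j))%:R
  ((o1 == i) && (o2 == j))%:R ((o1 == i) && (o3 == j))%:R
  ((o2 == i) && (o0 == j))%:R ((o2 == i) && (o1 == j))%:R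
  ((o2 == i) && (o2 == j))%:R ((o2 == i) && (o3 == j))%:R
  ((o3 == i) && (o0 == j))%:R ((o3 == i) && (o1 == j))%:R
  ((o3 == i) && (o2 == j))%:R ((o3 == i) && (o3 == j))%:R.
Proof.
apply/matrixP => r s; rewrite !mxE.
by ord4 r; ord4 s; congr (((_ == i) && (_ == j))%:R); apply: val_inj.
Qed.

Lemma borel_delta (i j : 'I_4) : (i < j)%N -> in_borel_alg (E i j).
Proof.
move=> lij; split.
  move=> r s lsr; rewrite mxE; case: (r =P i) => [eri|] //=; case: (s =P j) => [esj|] //=.
  by move: lsr; rewrite eri esj ltnNge ltnW.
rewrite /in_sl /mxtrace big1 // => k _; rewrite mxE; apply/eqP; rewrite pnatr_eq0 eqb0.
by apply: contraTN lij => /andP [/eqP <- /eqP <-]; rewrite ltnn.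
Qed.

Lemma two_neq0 : (2 : CC) != 0.
Proof. by rewrite pnatr_eq0. Qed.

Lemma trace0_span (H : {vspace 'M4}) :
  E o0 o1 \in H -> E o0 o2 \in H -> E o0 o3 \in H -> E o1 o0 \in H -> E o1 o2 \in H ->
  E o1 o3 \in H -> E o2 o0 \in H -> E o2 o1 \in H -> E o2 o3 \in H -> E o3 o0 \in H ->
  E o3 o1 \in H -> E o3 o2 \in H ->
  E o0 o0 - E o3 o3 \in H -> E o1 o1 - E o3 o3 \in H -> E o2 o2 - E o3 o3 \in H ->
  forall A : 'M4, \tr A = 0 -> A \in H.
Proof.
move=> h01 h02 h03 h10 h12 h13 h20 h21 h23 h30 h31 h32 d0 d1 d2 A trA.
have e33 : A o3 o3 = - (A o0 o0 + A o1 o1 + A o2 o2).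
  by move: trA; rewrite {1}(mx4_eta A) mxtrace_mx4 => trA; rewrite -[RHS]addr0 -trA; ring.
have -> : A = A o0 o1 *: E o0 o1 + A o0 o2 *: E o0 o2 + A o0 o3 *: E o0 o3
  + A o1 o0 *: E o1 o0 + A o1 o2 *: E o1 o2 + A o1 o3 *: E o1 o3
  + A o2 o0 *: E o2 o0 + A o2 o1 *: E o2 o1 + A o2 o3 *: E o2 o3
  + A o3 o0 *: E o3 o0 + A o3 o1 *: E o3 o1 + A o3 o2 *: E o3 o2
  + A o0 o0 *: (E o0 o0 - E o3 o3) + A o1 o1 *: (E o1 o1 - E o3 o3)
  + A o2 o2 *: (E o2 o2 - E o3 o3).
  by rewrite {1}(mx4_eta A) e33 !delta_mx4 /=; mx4_ring.
by rewrite !rpredD ?rpredZ.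
Qed.

Section BorelStable.

Variable H : {vspace 'M4}.
Hypothesis hH : hessenberg_space H.

Lemma hess_delta_of_entry A i j : A \in H -> i != j -> A i j != 0 -> E i j \in H.
Proof. by move=> hA ij nz; apply: (memvZ_cancel nz); apply: hess_root_component. Qed.

Let neg2_neq0 : (-2 : CC) != 0. Proof. by rewrite oppr_eq0 two_neq0. Qed.

Ltac bracket i j h :=
  apply: (hess_bracket (y := E i j) hH (borel_delta (isT : (i < j)%N)) h);
  rewrite ?mulmxBl ?mulmxBr !mul_delta_mx_cond /= ?mulr0n ?mulr1n ?subr0 ?sub0r;
  rewrite !delta_mx4 /=; mx4_ring.

Lemma hess_full_of_E30 : E o3 o0 \in H -> forall A : 'M4, \tr A = 0 -> A \in H.
Proof.
move=> h30.
have h31 : E o3 o1 \in H by rewrite -rpredN; bracket o0 o1 h30.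
have h32 : E o3 o2 \in H by rewrite -rpredN; bracket o0 o2 h30.
have d03 : E o0 o0 - E o3 o3 \in H by bracket o0 o3 h30.
have h10 : E o1 o0 \in H by bracket o1 o3 h30.
have h20 : E o2 o0 \in H by bracket o2 o3 h30.
have d13 : E o1 o1 - E o3 o3 \in H by bracket o1 o3 h31.
have h21 : E o2 o1 \in H by bracket o2 o3 h31.
have d23 : E o2 o2 - E o3 o3 \in H by bracket o2 o3 h32.
have h01 : E o0 o1 \in H by rewrite -rpredN; bracket o0 o1 d03.
have h02 : E o0 o2 \in H by rewrite -rpredN; bracket o0 o2 d03.
have h03 : E o0 o3 \in H by apply: (memvZ_cancel neg2_neq0); bracket o0 o3 d03.
have h12 : E o1 o2 \in H by rewrite -rpredN; bracket o1 o2 d13.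
have h13 : E o1 o3 \in H by apply: (memvZ_cancel neg2_neq0); bracket o1 o3 d13.
have h23 : E o2 o3 \in H by apply: (memvZ_cancel neg2_neq0); bracket o2 o3 d23.
exact: trace0_span.
Qed.

Lemma hess_col0_of_E31 : E o3 o1 \in H ->
  forall A : 'M4, (forall i, A i o0 = 0) -> \tr A = 0 -> A \in H.
Proof.
move=> h31 A col0 trA.
have h01 : E o0 o1 \in H by bracket o0 o3 h31.
have d13 : E o1 o1 - E o3 o3 \in H by bracket o1 o3 h31.
have h21 : E o2 o1 \in H by bracket o2 o3 h31.
have h32 : E o3 o2 \in H by rewrite -rpredN; bracket o1 o2 h31.
have d12 : E o1 o1 - E o2 o2 \in H by bracket o1 o2 h21.
have h23 : E o2 o3 \in H by rewrite -rpredN; bracket o1 o3 h21.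
have d23 : E o2 o2 - E o3 o3 \in H by bracket o2 o3 h32.
have h02 : E o0 o2 \in H by rewrite -rpredN; bracket o0 o2 d12.
have h03 : E o0 o3 \in H by rewrite -rpredN; bracket o0 o3 d13.
have h12 : E o1 o2 \in H by apply: (memvZ_cancel neg2_neq0); bracket o1 o2 d12.
have h13 : E o1 o3 \in H by apply: (memvZ_cancel neg2_neq0); bracket o1 o3 d13.
have e33 : A o3 o3 = - (A o1 o1 + A o2 o2).
  by move: trA; rewrite {1}(mx4_eta A) mxtrace_mx4 col0 => trA; rewrite -[RHS]addr0 -trA; ring.
have -> : A = A o0 o1 *: E o0 o1 + A o0 o2 *: E o0 o2 + A o0 o3 *: E o0 o3
  + A o1 o2 *: E o1 o2 + A o1 o3 *: E o1 o3 + A o2 o3 *: E o2 o3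
  + A o2 o1 *: E o2 o1 + A o3 o1 *: E o3 o1 + A o3 o2 *: E o3 o2
  + A o1 o1 *: (E o1 o1 - E o3 o3) + A o2 o2 *: (E o2 o2 - E o3 o3).
  by rewrite {1}(mx4_eta A) !col0 e33 !delta_mx4 /=; mx4_ring.
by rewrite !rpredD ?rpredZ.
Qed.

Lemma hess_row3_of_E20 : E o2 o0 \in H ->
  forall A : 'M4, (forall j, A o3 j = 0) -> \tr A = 0 -> A \in H.
Proof.
move=> h20 A row3 trA.
have h23 : E o2 o3 \in H by rewrite -rpredN; bracket o0 o3 h20.
have d02 : E o0 o0 - E o2 o2 \in H by bracket o0 o2 h20.
have h21 : E o2 o1 \in H by rewrite -rpredN; bracket o0 o1 h20.
have h10 : E o1 o0 \in H by bracket o1 o2 h20.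
have d12 : E o1 o1 - E o2 o2 \in H by bracket o1 o2 h21.
have h01 : E o0 o1 \in H by bracket o0 o2 h21.
have h13 : E o1 o3 \in H by rewrite -rpredN; bracket o1 o3 d12.
have h03 : E o0 o3 \in H by rewrite -rpredN; bracket o0 o3 d02.
have h12 : E o1 o2 \in H by apply: (memvZ_cancel neg2_neq0); bracket o1 o2 d12.
have h02 : E o0 o2 \in H by apply: (memvZ_cancel neg2_neq0); bracket o0 o2 d02.
have e22 : A o2 o2 = - (A o0 o0 + A o1 o1).
  by move: trA; rewrite {1}(mx4_eta A) mxtrace_mx4 row3 => trA; rewrite -[RHS]addr0 -trA; ring.
have -> : A = A o0 o1 *: E o0 o1 + A o0 o2 *: E o0 o2 + A o0 o3 *: E o0 o3
  + A o1 o0 *: E o1 o0 + A o1 o2 *: E o1 o2 + A o1 o3 *: E o1 o3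
  + A o2 o0 *: E o2 o0 + A o2 o1 *: E o2 o1 + A o2 o3 *: E o2 o3
  + A o0 o0 *: (E o0 o0 - E o2 o2) + A o1 o1 *: (E o1 o1 - E o2 o2).
  by rewrite {1}(mx4_eta A) !row3 e22 !delta_mx4 /=; mx4_ring.
by rewrite !rpredD ?rpredZ.
Qed.

Lemma hess_col3_of_E32 : E o3 o2 \in H ->
  [/\ E o0 o3 \in H, E o1 o3 \in H & E o2 o3 \in H].
Proof.
move=> h32; have d23 : E o2 o2 - E o3 o3 \in H by bracket o2 o3 h32.
split; first by rewrite -rpredN; bracket o0 o3 d23.
  by rewrite -rpredN; bracket o1 o3 d23.
by apply: (memvZ_cancel neg2_neq0); bracket o2 o3 d23.
Qed.

Lemma hess_row0_of_E10 : E o1 o0 \in H ->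
  [/\ E o0 o1 \in H, E o0 o2 \in H & E o0 o3 \in H].
Proof.
move=> h10; have d01 : E o0 o0 - E o1 o1 \in H by bracket o0 o1 h10.
split; first by apply: (memvZ_cancel neg2_neq0); bracket o0 o1 d01.
  by rewrite -rpredN; bracket o0 o2 d01.
by rewrite -rpredN; bracket o0 o3 d01.
Qed.

End BorelStable.

(* [s1], [s2], [s3] are the lifts to SL_4 of the simple transpositions, and [s13] stands
   for [s1 *m s3], and so on. *)
Definition s1 : 'M4 := mx4 0 (-1) 0 0 1 0 0 0 0 0 1 0 0 0 0 1.
Definition s2 : 'M4 := mx4 1 0 0 0 0 0 (-1) 0 0 1 0 0 0 0 0 1.
Definition s3 : 'M4 := mx4 1 0 0 0 0 1 0 0 0 0 0 (-1) 0 0 1 0.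
Definition s12 : 'M4 := mx4 0 0 1 0 1 0 0 0 0 1 0 0 0 0 0 1.
Definition s21 : 'M4 := mx4 0 (-1) 0 0 0 0 (-1) 0 1 0 0 0 0 0 0 1.
Definition s13 : 'M4 := mx4 0 (-1) 0 0 1 0 0 0 0 0 0 (-1) 0 0 1 0.
Definition s23 : 'M4 := mx4 1 0 0 0 0 0 0 1 0 1 0 0 0 0 1 0.
Definition s32 : 'M4 := mx4 1 0 0 0 0 0 (-1) 0 0 0 0 (-1) 0 1 0 0.
Definition s123 : 'M4 := mx4 0 0 0 (-1) 1 0 0 0 0 1 0 0 0 0 1 0.
Definition s321 : 'M4 := mx4 0 (-1) 0 0 0 0 (-1) 0 0 0 0 (-1) 1 0 0 0.

Lemma det_s1 : \det s1 = 1.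
Proof.
rewrite (_ : s1 = mx4 1 0 0 0 1 1 0 0 0 0 1 0 0 0 0 1 *m mx4 1 (-1) 0 0 0 1 0 0 0 0 1 0 0 0 0 1
                 *m mx4 1 0 0 0 1 1 0 0 0 0 1 0 0 0 0 1); last by rewrite /s1; mx4_ring.
by rewrite !det_mulmx det_mx4_lower det_mx4_upper; ring.
Qed.

Lemma det_s2 : \det s2 = 1.
Proof.
rewrite (_ : s2 = mx4 1 0 0 0 0 1 0 0 0 1 1 0 0 0 0 1 *m mx4 1 0 0 0 0 1 (-1) 0 0 0 1 0 0 0 0 1
                 *m mx4 1 0 0 0 0 1 0 0 0 1 1 0 0 0 0 1); last by rewrite /s2; mx4_ring.
by rewrite !det_mulmx det_mx4_lower det_mx4_upper; ring.
Qed.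

Lemma det_s3 : \det s3 = 1.
Proof.
rewrite (_ : s3 = mx4 1 0 0 0 0 1 0 0 0 0 1 0 0 0 1 1 *m mx4 1 0 0 0 0 1 0 0 0 0 1 (-1) 0 0 0 1
                 *m mx4 1 0 0 0 0 1 0 0 0 0 1 0 0 0 1 1); last by rewrite /s3; mx4_ring.
by rewrite !det_mulmx det_mx4_lower det_mx4_upper; ring.
Qed.

Ltac det_signed P fs :=
  rewrite (_ : P = fs);
  [by rewrite !det_mulmx ?det_s1 ?det_s2 ?det_s3 !mulr1 | rewrite /P /s1 /s2 /s3; mx4_ring].

Lemma det_s12 : \det s12 = 1. Proof. by det_signed s12 (s1 *m s2). Qed.
Lemma det_s21 : \det s21 = 1. Proof. by det_signed s21 (s2 *m s1). Qed.
Lemma det_s23 : \det s23 = 1. Proof. by det_signed s23 (s2 *m s3). Qed.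
Lemma det_s32 : \det s32 = 1. Proof. by det_signed s32 (s3 *m s2). Qed.
Lemma det_s123 : \det s123 = 1. Proof. by det_signed s123 (s1 *m s2 *m s3). Qed.
Lemma det_s321 : \det s321 = 1. Proof. by det_signed s321 (s3 *m s2 *m s1). Qed.

Ltac curve hu pm det_pm gam b1 b2 :=
  apply: (zclosure_cell_curve (gam := gam) (b1 := b1) (b2 := b2)); rewrite ?hu;
  [ by mx4_ring
  | by apply: poly_fun_mx4; poly_fun
  | by move=> t tn0; rewrite /pm; mx4_field
  | by move=> t tn0; split; rewrite ?det_pm ?det_mx4_upper; try exact: upper_mx4; field ].

Ltac conj_in hs zcl P :=
  apply: (hess_of_zclosure hs zcl); rewrite /P trmx_mx4 mx4_1; mx4_ring.

Ltac orth P := rewrite /P trmx_mx4 mx4_1; mx4_ring.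

Ltac entry_neq0 P c :=
  rewrite /P ?trmx_mx4 !mul_mx4 mx4E /=;
  match goal with |- is_true (?e != 0) => rewrite (_ : e = c); last ring end; rewrite ?oppr_eq0.

Ltac diag_of hH hP P :=
  apply: (hess_diag_componentE hH hP);
  rewrite diag_mx4 /P trmx_mx4 !mul_mx4 !mx4E /=; f_equal; ring.

(** * The Schubert variety of 2341 *)

Definition pm2341 : 'M4 := mx4 0 0 0 1 1 0 0 0 0 1 0 0 0 0 1 0.

Lemma det_pm2341 : \det pm2341 = -1.
Proof.
have -> : pm2341 = mx4 (-1) 0 0 0 0 1 0 0 0 0 1 0 0 0 0 1 *m s123.
  by rewrite /pm2341 /s123; mx4_ring.
by rewrite det_mulmx det_s123 det_mx4_upper; ring.
Qed.

Section Schubert2341.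

Variable u : 'S_4.
Hypothesis hu : perm_matrix u = pm2341.

Lemma bruhat_cell2341_entries g : bruhat_cell u g -> g o3 o1 = 0 /\ g o2 o0 = 0.
Proof.
move=> [b1 [b2 [wd [[ub1 _] [[ub2 _] [[_ [c ->]] ->]]]]]].
rewrite hu (upper_mx4_eta ub1) (upper_mx4_eta ub2) /pm2341.
by rewrite scale_mx4 !mul_mx4 !mx4E /=; split; ring.
Qed.

Lemma zclosure2341_1 : zclosure (bruhat_cell u) 1%:M.
Proof.
rewrite mx4_1; curve hu pm2341 det_pm2341
  (fun t => mx4 1 0 0 0 t 1 0 0 0 t 1 0 0 0 t 1)
  (fun t => mx4 (-1) t^-1 (- (t ^+ 2)^-1) (t ^+ 3)^-1 0 1 0 0 0 0 1 0 0 0 0 1)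
  (fun t => mx4 t 1 0 0 0 t 1 0 0 0 t 1 0 0 0 (t ^+ 3)^-1).
Qed.

Lemma zclosure2341_s1 : zclosure (bruhat_cell u) s1.
Proof.
rewrite /s1; curve hu pm2341 det_pm2341
  (fun t => mx4 0 (-1) 0 0 1 0 0 0 0 t 1 0 0 0 t 1)
  (fun t => mx4 (-1) 0 (- t^-1) (t ^+ 2)^-1 0 1 0 0 0 0 1 0 0 0 0 1)
  (fun t => mx4 1 0 0 0 0 t 1 0 0 0 t 1 0 0 0 (t ^+ 2)^-1).
Qed.

Lemma zclosure2341_s2 : zclosure (bruhat_cell u) s2.
Proof.
rewrite /s2; curve hu pm2341 det_pm2341
  (fun t => mx4 1 0 0 0 t 0 (-1) 0 0 1 0 0 0 0 t 1)
  (fun t => mx4 (-1) t^-1 0 (t ^+ 2)^-1 0 1 0 0 0 0 1 0 0 0 0 1)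
  (fun t => mx4 t 0 (-1) 0 0 1 0 0 0 0 t 1 0 0 0 (t ^+ 2)^-1).
Qed.

Lemma zclosure2341_s3 : zclosure (bruhat_cell u) s3.
Proof.
rewrite /s3; curve hu pm2341 det_pm2341
  (fun t => mx4 1 0 0 0 t 1 0 0 0 t 0 (-1) 0 0 1 0)
  (fun t => mx4 (-1) t^-1 (- (t ^+ 2)^-1) 0 0 1 0 0 0 0 1 0 0 0 0 1)
  (fun t => mx4 t 1 0 0 0 t 0 (-1) 0 0 1 0 0 0 0 (t ^+ 2)^-1).
Qed.

Lemma zclosure2341_s13 : zclosure (bruhat_cell u) s13.
Proof.
rewrite /s13; curve hu pm2341 det_pm2341
  (fun t => mx4 0 (-1) 0 0 1 0 0 0 0 t 0 (-1) 0 0 1 0)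
  (fun t => mx4 (-1) 0 (- t^-1) 0 0 1 0 0 0 0 1 0 0 0 0 1)
  (fun t => mx4 1 0 0 0 0 t 0 (-1) 0 0 1 0 0 0 0 t^-1).
Qed.

Lemma zclosure2341_s23 : zclosure (bruhat_cell u) s23.
Proof.
rewrite /s23; curve hu pm2341 det_pm2341
  (fun t => mx4 1 0 0 0 t 0 0 1 0 1 0 0 0 0 1 0)
  (fun t => mx4 (-1) t^-1 0 0 0 1 0 0 0 0 1 0 0 0 0 1)
  (fun t => mx4 t 0 0 1 0 1 0 0 0 0 1 0 0 0 0 t^-1).
Qed.

Lemma zclosure2341_s123 : zclosure (bruhat_cell u) s123.
Proof.
move=> f _ hf; apply: hf; rewrite (_ : s123 = mx4 (-1) 0 0 0 0 1 0 0 0 0 1 0 0 0 0 1 *m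
  perm_matrix u *m mx4 1 0 0 0 0 1 0 0 0 0 1 0 0 0 0 1); last by rewrite hu /s123 /pm2341; mx4_ring.
by apply: bruhat_cell_factor; rewrite ?hu ?det_pm2341 ?det_mx4_upper; try exact: upper_mx4; ring.
Qed.

Variables a11 a12 a13 a14 a21 a22 a23 a24 a31 a32 a33 a34 a41 a42 a43 a44 : CC.
(* The entries [aij] are numbered from 1, the indices [o0] .. [o3] from 0. *)
Local Notation X := (mx4 a11 a12 a13 a14 a21 a22 a23 a24 a31 a32 a33 a34 a41 a42 a43 a44).
Variable H : {vspace 'M4}.
Hypothesis hH : hessenberg_space H.
Hypothesis trX : a11 + a22 + a33 + a44 = 0.
Hypothesis hess_schubert : forall g, in_hess X H g <-> in_schubert u g.

Lemma hess2341_X : X \in H.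
Proof.
have := hess_of_zclosure hess_schubert zclosure2341_1 (mulmx1 _).
by rewrite mul1mx mulmx1.
Qed.

Lemma hess2341_s1 : s1^T *m X *m s1 \in H.
Proof. by conj_in hess_schubert zclosure2341_s1 s1. Qed.
Lemma hess2341_s2 : s2^T *m X *m s2 \in H.
Proof. by conj_in hess_schubert zclosure2341_s2 s2. Qed.
Lemma hess2341_s3 : s3^T *m X *m s3 \in H.
Proof. by conj_in hess_schubert zclosure2341_s3 s3. Qed.
Lemma hess2341_s13 : s13^T *m X *m s13 \in H.
Proof. by conj_in hess_schubert zclosure2341_s13 s13. Qed.
Lemma hess2341_s23 : s23^T *m X *m s23 \in H.
Proof. by conj_in hess_schubert zclosure2341_s23 s23. Qed.
Lemma hess2341_s123 : s123^T *m X *m s123 \in H.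
Proof. by conj_in hess_schubert zclosure2341_s123 s123. Qed.

Lemma not_hess2341 g gi : \det g = 1 -> g *m gi = 1%:M ->
  (g o3 o1 != 0) || (g o2 o0 != 0) -> gi *m X *m g \notin H.
Proof.
move=> dg hg /orP [nz|nz]; apply: (not_hess_of_polyfun hess_schubert (polyfun_coord _ _)) nz => //.
  by move=> g' /bruhat_cell2341_entries [].
by move=> g' /bruhat_cell2341_entries [].
Qed.

Lemma E30_of_2341 : [|| a41 != 0, a31 != 0, a21 != 0, a42 != 0, a32 != 0 | a12 != 0] ->
  E o3 o0 \in H.
Proof.
case/or3P => [nz|nz|/or4P [nz|nz|nz|nz]].
- by apply: (hess_delta_of_entry hH hess2341_X); rewrite // mx4E.
- by apply: (hess_delta_of_entry hH hess2341_s3) => //; entry_neq0 s3 (- a31).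
- by apply: (hess_delta_of_entry hH hess2341_s23) => //; entry_neq0 s23 a21.
- by apply: (hess_delta_of_entry hH hess2341_s1) => //; entry_neq0 s1 a42.
- by apply: (hess_delta_of_entry hH hess2341_s13) => //; entry_neq0 s13 (- a32).
- by apply: (hess_delta_of_entry hH hess2341_s123) => //; entry_neq0 s123 (- a12).
Qed.

Lemma no_E30_2341 : E o3 o0 \notin H.
Proof.
have o32 : s32 *m s32^T = 1%:M by orth s32.
apply: contraNN (not_hess2341 det_s32 o32 (_ : _ || _)) => [h30|].
  by apply: (hess_full_of_E30 hH h30); rewrite mxtrace_conj ?mxtrace_mx4.
by rewrite /s32 mx4E /= oner_eq0.
Qed.

Lemma E31_of_2341 : [|| a13 != 0, a23 != 0 | a43 != 0] -> E o3 o1 \in H.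
Proof.
case/or3P => nz.
- by apply: (hess_delta_of_entry hH hess2341_s123) => //; entry_neq0 s123 (- a13).
- by apply: (hess_delta_of_entry hH hess2341_s23) => //; entry_neq0 s23 a23.
- by apply: (hess_delta_of_entry hH hess2341_s2) => //; entry_neq0 s2 a43.
Qed.

Lemma no_E31_2341 : a21 = 0 -> a31 = 0 -> a41 = 0 -> E o3 o1 \notin H.
Proof.
move=> z21 z31 z41; have o32 : s32 *m s32^T = 1%:M by orth s32.
apply: contraNN (not_hess2341 det_s32 o32 (_ : _ || _)) => [h31|]; last first.
  by rewrite /s32 mx4E /= oner_eq0.
rewrite -(subrK X (_ *m s32)) rpredD ?hess2341_X //; apply: (hess_col0_of_E31 hH h31).
  by move=> i; rewrite /s32 trmx_mx4 !mul_mx4 opp_mx4 add_mx4 mx4E z21 z31 z41; ord4 i => /=; ring.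
by rewrite raddfB /= mxtrace_conj // subrr.
Qed.

Lemma hess2341_diag : [/\ diag4 a11 a22 a33 a44 \in H, diag4 a11 a33 a44 a22 \in H,
  (a22 - a11) *: (E o0 o0 - E o1 o1) \in H, (a33 - a22) *: (E o1 o1 - E o2 o2) \in H &
  (a44 - a33) *: (E o2 o2 - E o3 o3) \in H].
Proof.
have dX : diag4 a11 a22 a33 a44 \in H.
  by have := hess_diag_component hH hess2341_X; rewrite diag_mx4 !mx4E.
have d1 : diag4 a22 a11 a33 a44 \in H by diag_of hH hess2341_s1 s1.
have d2 : diag4 a11 a33 a22 a44 \in H by diag_of hH hess2341_s2 s2.
have d3 : diag4 a11 a22 a44 a33 \in H by diag_of hH hess2341_s3 s3.
split=> //; first by diag_of hH hess2341_s23 s23.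
- by rewrite (_ : _ *: _ = diag4 a22 a11 a33 a44 - diag4 a11 a22 a33 a44) ?rpredB //;
    rewrite !delta_mx4 /=; mx4_ring.
- by rewrite (_ : _ *: _ = diag4 a11 a33 a22 a44 - diag4 a11 a22 a33 a44) ?rpredB //;
    rewrite !delta_mx4 /=; mx4_ring.
- by rewrite (_ : _ *: _ = diag4 a11 a22 a44 a33 - diag4 a11 a22 a33 a44) ?rpredB //;
    rewrite !delta_mx4 /=; mx4_ring.
Qed.

Lemma hess2341_diag_key :
  (a33 - a11) *: (E o0 o0 - E o1 o1) \in H \/ [/\ a11 = 0, a22 = 0 & a33 != 0].
Proof.
have [dX dY k01 k12 k23] := hess2341_diag.
have [e01|n01] := eqVneq a11 a22; last first.
  by left; apply/rpredZ/(memvZ_cancel _ k01); rewrite subr_eq0 eq_sym.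
have [e31|n31] := eqVneq a33 a11; first by left; rewrite e31 subrr scale0r rpred0.
have d12 : E o1 o1 - E o2 o2 \in H.
  by apply: (memvZ_cancel _ k12); rewrite subr_eq0 -e01.
have [z11|nz11] := eqVneq a11 0; first by right; rewrite -e01 -z11.
left; apply: rpredZ.
have [e34|n34] := eqVneq a33 a44.
  have e33 : a33 = - a11.
    have /eqP : 2 * (a33 + a11) = 0 by rewrite -trX -e01 -e34; ring.
    by rewrite mulf_eq0 (negPf two_neq0) addr_eq0 => /eqP.
  apply: (memvZ_cancel (c := 2 * a11)); first by rewrite mulf_neq0 ?two_neq0.
  rewrite (_ : _ *: _ = diag4 a11 a33 a44 a22 + diag4 a11 a22 a33 a44
                        - (2 * a11) *: (E o1 o1 - E o2 o2)) ?rpredB ?rpredD ?rpredZ //.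
  by rewrite -e01 -e34 e33 !delta_mx4 /=; mx4_ring.
have d23 : E o2 o2 - E o3 o3 \in H.
  by apply: (memvZ_cancel _ k23); rewrite subr_eq0 eq_sym.
apply: (memvZ_cancel nz11).
rewrite (_ : _ *: _ = diag4 a11 a22 a33 a44 - (2 * a11) *: (E o1 o1 - E o2 o2)
                      - (2 * a11 + a33) *: (E o2 o2 - E o3 o3)) ?rpredB ?rpredZ //.
have e44 : a44 = - (2 * a11 + a33) by rewrite -[RHS]addr0 -trX -e01; ring.
by rewrite -e01 e44 !delta_mx4 /=; mx4_ring.
Qed.

Lemma E32_of_2341 : [|| a14 != 0, a24 != 0 | a34 != 0] -> E o3 o2 \in H.
Proof.
case/or3P => nz.
- by apply: (hess_delta_of_entry hH hess2341_s123) => //; entry_neq0 s123 (- a14).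
- by apply: (hess_delta_of_entry hH hess2341_s23) => //; entry_neq0 s23 a24.
- by apply: (hess_delta_of_entry hH hess2341_s3) => //; entry_neq0 s3 (- a34).
Qed.

Section UpperTriangular.

Hypotheses (z12 : a12 = 0) (z13 : a13 = 0) (z21 : a21 = 0) (z23 : a23 = 0) (z31 : a31 = 0).
Hypotheses (z32 : a32 = 0) (z41 : a41 = 0) (z42 : a42 = 0) (z43 : a43 = 0).

(* [bm] conjugates [X] to diag(0, 0, a33, -a33), whose conjugates by [s2] and by [s32]
   are opposite; but [bm *m s32] is not in X_u. *)
Lemma hess2341_exceptional : a11 = 0 -> a22 = 0 -> a33 != 0 -> False.
Proof.
move=> z11 z22 nz33; have e44 : a44 = - a33 by rewrite -[RHS]addr0 -trX z11 z22; ring.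
have nz2a : 2 * a33 != 0 by rewrite mulf_neq0 ?two_neq0.
pose bm := mx4 1 0 0 (- (a14 / a33)) 0 1 0 (- (a24 / a33)) 0 0 1 (- (a34 / (2 * a33))) 0 0 0 1.
pose bp := mx4 1 0 0 (a14 / a33) 0 1 0 (a24 / a33) 0 0 1 (a34 / (2 * a33)) 0 0 0 1.
have bm_B : inB bm by split; [exact: upper_mx4 | rewrite /inSL det_mx4_upper; ring].
have hD : (s2^T *m bp) *m X *m (bm *m s2) \in H.
  apply: (hess_of_zclosure hess_schubert (zclosure_cell_mulBl bm_B zclosure2341_s2)).
  by rewrite /bm /bp /s2 trmx_mx4 mx4_1; mx4_ring.
have eD : (s2^T *m bp) *m X *m (bm *m s2) = a33 *: (E o1 o1 - E o3 o3).
  rewrite /bm /bp /s2 z11 z22 e44 z12 z13 z21 z23 z31 z32 z41 z42 z43 !delta_mx4 /=.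
  by rewrite trmx_mx4; mx4_field.
apply: (negP (not_hess2341 (g := bm *m s32) (gi := s32^T *m bp) _ _ _)).
- by rewrite det_mulmx det_s32 det_mx4_upper; ring.
- by rewrite /bm /bp /s32 trmx_mx4 mx4_1; mx4_ring.
- by rewrite /bm /s32 mul_mx4 mx4E /= (_ : _ + _ = 1) ?oner_eq0 //; ring.
have -> : (s32^T *m bp) *m X *m (bm *m s32) = - (a33 *: (E o1 o1 - E o3 o3)).
  rewrite /bm /bp /s32 z11 z22 e44 z12 z13 z21 z23 z31 z32 z41 z42 z43 !delta_mx4 /=.
  by rewrite trmx_mx4; mx4_field.
by rewrite rpredN -eD.
Qed.

Lemma hess2341_upper_absurd : False.
Proof.
have [_ _ _ k12 _] := hess2341_diag.
case: hess2341_diag_key => [k01|[z11 z22 nz33]]; last exact: hess2341_exceptional.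
have col3 : a34 *: E o0 o3 - a14 *: E o0 o3 - a14 *: E o1 o3 - a24 *: E o1 o3
            - a24 *: E o2 o3 - a34 *: E o2 o3 \in H.
  have [nz|] := boolP [|| a14 != 0, a24 != 0 | a34 != 0].
    by have [h03 h13 h23] := hess_col3_of_E32 hH (E32_of_2341 nz); rewrite !rpredB ?rpredZ.
  rewrite !negb_or !negbK => /and3P [/eqP -> /eqP -> /eqP ->].
  by rewrite !scale0r !subr0 rpred0.
apply: (negP (not_hess2341 (g := s21) (gi := s21^T) det_s21 _ _)).
- by rewrite /s21 trmx_mx4 mx4_1; mx4_ring.
- by rewrite /s21 !mx4E /= eqxx oner_eq0.
have -> : s21^T *m X *m s21 = X + (a33 - a11) *: (E o0 o0 - E o1 o1)
    + (a33 - a22) *: (E o1 o1 - E o2 o2) + (a34 *: E o0 o3 - a14 *: E o0 o3 - a14 *: E o1 o3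
    - a24 *: E o1 o3 - a24 *: E o2 o3 - a34 *: E o2 o3).
  rewrite /s21 z12 z13 z21 z23 z31 z32 z41 z42 z43 !delta_mx4 /=.
  by rewrite trmx_mx4; mx4_ring.
by apply: rpredD col3; apply: rpredD k12; apply: rpredD hess2341_X k01.
Qed.

End UpperTriangular.

Lemma schubert2341_not_hessenberg : False.
Proof.
have E30 := negP no_E30_2341.
case: (eqVneq a41 0) => [z41|n]; last by apply/E30/E30_of_2341; rewrite n.
case: (eqVneq a31 0) => [z31|n]; last by apply/E30/E30_of_2341; rewrite n orbT.
case: (eqVneq a21 0) => [z21|n]; last by apply/E30/E30_of_2341; rewrite n !orbT.
case: (eqVneq a42 0) => [z42|n]; last by apply/E30/E30_of_2341; rewrite n !orbT.
case: (eqVneq a32 0) => [z32|n]; last by apply/E30/E30_of_2341; rewrite n !orbT.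
case: (eqVneq a12 0) => [z12|n]; last by apply/E30/E30_of_2341; rewrite n !orbT.
have E31 := negP (no_E31_2341 z21 z31 z41).
case: (eqVneq a13 0) => [z13|n]; last by apply/E31/E31_of_2341; rewrite n.
case: (eqVneq a23 0) => [z23|n]; last by apply/E31/E31_of_2341; rewrite n orbT.
case: (eqVneq a43 0) => [z43|n]; last by apply/E31/E31_of_2341; rewrite n !orbT.
exact: hess2341_upper_absurd.
Qed.

End Schubert2341.

(** * The Schubert variety of 4123 *)

Definition pm4123 : 'M4 := mx4 0 1 0 0 0 0 1 0 0 0 0 1 1 0 0 0.

Lemma det_pm4123 : \det pm4123 = -1.
Proof.
have := det_s321; rewrite (_ : s321 = mx4 (-1) 0 0 0 0 1 0 0 0 0 1 0 0 0 0 1 *m pm4123 *m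
  mx4 1 0 0 0 0 1 0 0 0 0 (-1) 0 0 0 0 (-1)); last by rewrite /s321 /pm4123; mx4_ring.
rewrite !det_mulmx !det_mx4_upper => h.
have -> : \det pm4123 = - ((-1 * 1 * 1 * 1) * \det pm4123 * (1 * 1 * (-1) * (-1))) by ring.
by rewrite h.
Qed.

Definition minor1 (g : 'M4) := g o1 o0 * g o2 o1 - g o1 o1 * g o2 o0.
Definition minor2 (g : 'M4) := g o2 o1 * g o3 o2 - g o2 o2 * g o3 o1.

Lemma polyfun_minor1 : polyfun minor1.
Proof. by apply: polyfunB; do !constructor. Qed.

Lemma polyfun_minor2 : polyfun minor2.
Proof. by apply: polyfunB; do !constructor. Qed.

Section Schubert4123.

Variable u : 'S_4.
Hypothesis hu : perm_matrix u = pm4123.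

Lemma bruhat_cell4123_minors g : bruhat_cell u g -> minor1 g = 0 /\ minor2 g = 0.
Proof.
move=> [b1 [b2 [wd [[ub1 _] [[ub2 _] [[_ [c ->]] ->]]]]]].
rewrite hu (upper_mx4_eta ub1) (upper_mx4_eta ub2) /pm4123 /minor1 /minor2.
by rewrite scale_mx4 !mul_mx4 !mx4E /=; split; ring.
Qed.

Lemma zclosure4123_1 : zclosure (bruhat_cell u) 1%:M.
Proof.
rewrite mx4_1; curve hu pm4123 det_pm4123
  (fun t => mx4 1 0 0 0 t 1 0 0 (t ^+ 2) t 1 0 (t ^+ 3) (t ^+ 2) t 1)
  (fun t => mx4 (-1) 0 0 (t ^+ 3)^-1 0 1 0 (t ^+ 2)^-1 0 0 1 t^-1 0 0 0 1)
  (fun t => mx4 (t ^+ 3) (t ^+ 2) t 1 0 t^-1 (t ^+ 2)^-1 (t ^+ 3)^-1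
                0 0 (- t^-1) (- (t ^+ 2)^-1) 0 0 0 (- t^-1)).
Qed.

Lemma zclosure4123_s3 : zclosure (bruhat_cell u) s3.
Proof.
rewrite /s3; curve hu pm4123 det_pm4123
  (fun t => mx4 1 0 0 0 t 1 0 0 0 0 0 (-1) (t ^+ 2) t 1 0)
  (fun t => mx4 (-1) 0 0 (t ^+ 2)^-1 0 1 0 t^-1 0 0 1 0 0 0 0 1)
  (fun t => mx4 (t ^+ 2) t 1 0 0 t^-1 (t ^+ 2)^-1 0 0 0 (- t^-1) 0 0 0 0 (-1)).
Qed.

Lemma zclosure4123_s2 : zclosure (bruhat_cell u) s2.
Proof.
rewrite /s2; curve hu pm4123 det_pm4123
  (fun t => mx4 1 0 0 0 0 0 (-1) 0 t 1 0 0 (t ^+ 2) t 0 1)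
  (fun t => mx4 (-1) 0 0 (t ^+ 2)^-1 0 1 0 0 0 0 1 t^-1 0 0 0 1)
  (fun t => mx4 (t ^+ 2) t 0 1 0 t^-1 0 (t ^+ 2)^-1 0 0 (-1) 0 0 0 0 (- t^-1)).
Qed.

Lemma zclosure4123_s1 : zclosure (bruhat_cell u) s1.
Proof.
rewrite /s1; curve hu pm4123 det_pm4123
  (fun t => mx4 0 (-1) 0 0 1 0 0 0 t 0 1 0 (t ^+ 2) 0 t 1)
  (fun t => mx4 (-1) 0 0 0 0 1 0 (t ^+ 2)^-1 0 0 1 t^-1 0 0 0 1)
  (fun t => mx4 (t ^+ 2) 0 t 1 0 1 0 0 0 0 (- t^-1) (- (t ^+ 2)^-1) 0 0 0 (- t^-1)).
Qed.

Lemma zclosure4123_s13 : zclosure (bruhat_cell u) s13.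
Proof.
rewrite /s13; curve hu pm4123 det_pm4123
  (fun t => mx4 0 (-1) 0 0 1 0 0 0 0 0 0 (-1) t 0 1 0)
  (fun t => mx4 (-1) 0 0 0 0 1 0 t^-1 0 0 1 0 0 0 0 1)
  (fun t => mx4 t 0 1 0 0 1 0 0 0 0 (- t^-1) 0 0 0 0 (-1)).
Qed.

Lemma zclosure4123_s21 : zclosure (bruhat_cell u) s21.
Proof.
rewrite /s21; curve hu pm4123 det_pm4123
  (fun t => mx4 0 (-1) 0 0 0 0 (-1) 0 1 0 0 0 t 0 0 1)
  (fun t => mx4 (-1) 0 0 0 0 1 0 0 0 0 1 t^-1 0 0 0 1)
  (fun t => mx4 t 0 0 1 0 1 0 0 0 0 (-1) 0 0 0 0 (- t^-1)).
Qed.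

Lemma zclosure4123_s321 : zclosure (bruhat_cell u) s321.
Proof.
move=> f _ hf; apply: hf; rewrite (_ : s321 = mx4 (-1) 0 0 0 0 1 0 0 0 0 1 0 0 0 0 1 *m
  perm_matrix u *m mx4 1 0 0 0 0 1 0 0 0 0 (-1) 0 0 0 0 (-1)); last first.
  by rewrite hu /s321 /pm4123; mx4_ring.
by apply: bruhat_cell_factor; rewrite ?hu ?det_pm4123 ?det_mx4_upper; try exact: upper_mx4; ring.
Qed.

Variables a11 a12 a13 a14 a21 a22 a23 a24 a31 a32 a33 a34 a41 a42 a43 a44 : CC.
Local Notation X := (mx4 a11 a12 a13 a14 a21 a22 a23 a24 a31 a32 a33 a34 a41 a42 a43 a44).
Variable H : {vspace 'M4}.
Hypothesis hH : hessenberg_space H.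
Hypothesis trX : a11 + a22 + a33 + a44 = 0.
Hypothesis hess_schubert : forall g, in_hess X H g <-> in_schubert u g.

Lemma hess4123_X : X \in H.
Proof.
have := hess_of_zclosure hess_schubert zclosure4123_1 (mulmx1 _).
by rewrite mul1mx mulmx1.
Qed.

Lemma hess4123_s1 : s1^T *m X *m s1 \in H.
Proof. by conj_in hess_schubert zclosure4123_s1 s1. Qed.
Lemma hess4123_s2 : s2^T *m X *m s2 \in H.
Proof. by conj_in hess_schubert zclosure4123_s2 s2. Qed.
Lemma hess4123_s3 : s3^T *m X *m s3 \in H.
Proof. by conj_in hess_schubert zclosure4123_s3 s3. Qed.
Lemma hess4123_s13 : s13^T *m X *m s13 \in H.
Proof. by conj_in hess_schubert zclosure4123_s13 s13. Qed.
Lemma hess4123_s21 : s21^T *m X *m s21 \in H.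
Proof. by conj_in hess_schubert zclosure4123_s21 s21. Qed.
Lemma hess4123_s321 : s321^T *m X *m s321 \in H.
Proof. by conj_in hess_schubert zclosure4123_s321 s321. Qed.

Lemma not_hess4123 g gi : \det g = 1 -> g *m gi = 1%:M ->
  (minor1 g != 0) || (minor2 g != 0) -> gi *m X *m g \notin H.
Proof.
move=> dg hg /orP [nz|nz].
  apply: (not_hess_of_polyfun hess_schubert polyfun_minor1) nz => // g'.
  by move=> /bruhat_cell4123_minors [].
apply: (not_hess_of_polyfun hess_schubert polyfun_minor2) nz => // g'.
by move=> /bruhat_cell4123_minors [].
Qed.

Lemma E30_of_4123 : [|| a41 != 0, a42 != 0, a31 != 0, a32 != 0, a43 != 0 | a34 != 0] ->
  E o3 o0 \in H.
Proof.
case/or3P => [nz|nz|/or4P [nz|nz|nz|nz]].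
- by apply: (hess_delta_of_entry hH hess4123_X); rewrite // mx4E.
- by apply: (hess_delta_of_entry hH hess4123_s1) => //; entry_neq0 s1 a42.
- by apply: (hess_delta_of_entry hH hess4123_s3) => //; entry_neq0 s3 (- a31).
- by apply: (hess_delta_of_entry hH hess4123_s13) => //; entry_neq0 s13 (- a32).
- by apply: (hess_delta_of_entry hH hess4123_s21) => //; entry_neq0 s21 a43.
- by apply: (hess_delta_of_entry hH hess4123_s321) => //; entry_neq0 s321 (- a34).
Qed.

Lemma minor1_s12 : minor1 s12 != 0.
Proof. by rewrite /minor1 /s12 !mx4E /= (_ : _ - _ = 1) ?oner_eq0 //; ring. Qed.

Lemma no_E30_4123 : E o3 o0 \notin H.
Proof.
have o12 : s12 *m s12^T = 1%:M by orth s12.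
apply: contraNN (not_hess4123 det_s12 o12 (_ : _ || _)) => [h30|]; last by rewrite minor1_s12.
by apply: (hess_full_of_E30 hH h30); rewrite mxtrace_conj ?mxtrace_mx4.
Qed.

Lemma E20_of_4123 : [|| a21 != 0, a23 != 0 | a24 != 0] -> E o2 o0 \in H.
Proof.
case/or3P => nz.
- by apply: (hess_delta_of_entry hH hess4123_s2) => //; entry_neq0 s2 (- a21).
- by apply: (hess_delta_of_entry hH hess4123_s21) => //; entry_neq0 s21 (- a23).
- by apply: (hess_delta_of_entry hH hess4123_s321) => //; entry_neq0 s321 (- a24).
Qed.

Lemma no_E20_4123 : a41 = 0 -> a42 = 0 -> a43 = 0 -> E o2 o0 \notin H.
Proof.
move=> z41 z42 z43; have o12 : s12 *m s12^T = 1%:M by orth s12.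
apply: contraNN (not_hess4123 det_s12 o12 (_ : _ || _)) => [h20|]; last by rewrite minor1_s12.
rewrite -(subrK X (_ *m s12)) rpredD ?hess4123_X //; apply: (hess_row3_of_E20 hH h20).
  by move=> j; rewrite /s12 trmx_mx4 !mul_mx4 opp_mx4 add_mx4 mx4E z41 z42 z43; ord4 j => /=; ring.
by rewrite raddfB /= mxtrace_conj // subrr.
Qed.

Lemma E10_of_4123 : [|| a12 != 0, a13 != 0 | a14 != 0] -> E o1 o0 \in H.
Proof.
case/or3P => nz.
- by apply: (hess_delta_of_entry hH hess4123_s1) => //; entry_neq0 s1 (- a12).
- by apply: (hess_delta_of_entry hH hess4123_s21) => //; entry_neq0 s21 (- a13).
- by apply: (hess_delta_of_entry hH hess4123_s321) => //; entry_neq0 s321 (- a14).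
Qed.

Lemma hess4123_diag : [/\ diag4 a11 a22 a33 a44 \in H, diag4 a33 a11 a22 a44 \in H,
  (a22 - a11) *: (E o0 o0 - E o1 o1) \in H, (a33 - a22) *: (E o1 o1 - E o2 o2) \in H &
  (a44 - a33) *: (E o2 o2 - E o3 o3) \in H].
Proof.
have dX : diag4 a11 a22 a33 a44 \in H.
  by have := hess_diag_component hH hess4123_X; rewrite diag_mx4 !mx4E.
have d1 : diag4 a22 a11 a33 a44 \in H by diag_of hH hess4123_s1 s1.
have d2 : diag4 a11 a33 a22 a44 \in H by diag_of hH hess4123_s2 s2.
have d3 : diag4 a11 a22 a44 a33 \in H by diag_of hH hess4123_s3 s3.
split=> //; first by diag_of hH hess4123_s21 s21.
- by rewrite (_ : _ *: _ = diag4 a22 a11 a33 a44 - diag4 a11 a22 a33 a44) ?rpredB //;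
    rewrite !delta_mx4 /=; mx4_ring.
- by rewrite (_ : _ *: _ = diag4 a11 a33 a22 a44 - diag4 a11 a22 a33 a44) ?rpredB //;
    rewrite !delta_mx4 /=; mx4_ring.
- by rewrite (_ : _ *: _ = diag4 a11 a22 a44 a33 - diag4 a11 a22 a33 a44) ?rpredB //;
    rewrite !delta_mx4 /=; mx4_ring.
Qed.

Lemma hess4123_diag_key :
  (a44 - a22) *: (E o2 o2 - E o3 o3) \in H \/ [/\ a33 = 0, a44 = 0 & a22 != 0].
Proof.
have [dX dY k01 k12 k23] := hess4123_diag.
have [e34|n34] := eqVneq a33 a44; last first.
  by left; apply/rpredZ/(memvZ_cancel _ k23); rewrite subr_eq0 eq_sym.
have [e24|n24] := eqVneq a22 a44; first by left; rewrite e24 subrr scale0r rpred0.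
have d12 : E o1 o1 - E o2 o2 \in H.
  by apply: (memvZ_cancel _ k12); rewrite subr_eq0 e34 eq_sym.
have [z44|nz44] := eqVneq a44 0; first by right; rewrite e34 z44; rewrite z44 in n24.
left; apply: rpredZ.
have [e01|n01] := eqVneq a11 a22.
  have e22 : a22 = - a44.
    have /eqP : 2 * (a22 + a44) = 0 by rewrite -trX e01 e34; ring.
    by rewrite mulf_eq0 (negPf two_neq0) addr_eq0 => /eqP.
  apply: (memvZ_cancel (c := 2 * a44)); first by rewrite mulf_neq0 ?two_neq0.
  rewrite (_ : _ *: _ = - (diag4 a33 a11 a22 a44 + diag4 a11 a22 a33 a44)
                        - (2 * a44) *: (E o1 o1 - E o2 o2)) ?rpredB ?rpredN ?rpredD ?rpredZ //.
  by rewrite e01 e34 e22 !delta_mx4 /=; mx4_ring.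
have d01 : E o0 o0 - E o1 o1 \in H by apply: (memvZ_cancel _ k01); rewrite subr_eq0 eq_sym.
apply: (memvZ_cancel nz44).
rewrite (_ : _ *: _ = a11 *: (E o0 o0 - E o1 o1) + (a11 + a22) *: (E o1 o1 - E o2 o2)
                      - diag4 a11 a22 a33 a44) ?rpredB ?rpredD ?rpredZ //.
have e11 : a11 = - (a22 + 2 * a44) by rewrite -[RHS]addr0 -trX e34; ring.
by rewrite e34 e11 !delta_mx4 /=; mx4_ring.
Qed.

Section UpperTriangular.

Hypotheses (z41 : a41 = 0) (z42 : a42 = 0) (z31 : a31 = 0) (z32 : a32 = 0) (z43 : a43 = 0).
Hypotheses (z34 : a34 = 0) (z21 : a21 = 0) (z23 : a23 = 0) (z24 : a24 = 0).

(* [bm] conjugates [X] to diag(-a22, a22, 0, 0), whose conjugates by [s2] and by [s12]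
   are opposite; but [bm *m s12] is not in X_u. *)
Lemma hess4123_exceptional : a33 = 0 -> a44 = 0 -> a22 != 0 -> False.
Proof.
move=> z33 z44 nz22; have e11 : a11 = - a22 by rewrite -[RHS]addr0 -trX z33 z44; ring.
have nz2a : 2 * a22 != 0 by rewrite mulf_neq0 ?two_neq0.
pose bm := mx4 1 (a12 / (2 * a22)) (a13 / a22) (a14 / a22) 0 1 0 0 0 0 1 0 0 0 0 1.
pose bp := mx4 1 (- (a12 / (2 * a22))) (- (a13 / a22)) (- (a14 / a22)) 0 1 0 0 0 0 1 0 0 0 0 1.
have bm_B : inB bm by split; [exact: upper_mx4 | rewrite /inSL det_mx4_upper; ring].
have hD : (s2^T *m bp) *m X *m (bm *m s2) \in H.
  apply: (hess_of_zclosure hess_schubert (zclosure_cell_mulBl bm_B zclosure4123_s2)).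
  by rewrite /bm /bp /s2 trmx_mx4 mx4_1; mx4_ring.
have eD : (s2^T *m bp) *m X *m (bm *m s2) = - a22 *: (E o0 o0 - E o2 o2).
  rewrite /bm /bp /s2 e11 z33 z44 z41 z42 z31 z32 z43 z34 z21 z23 z24 !delta_mx4 /=.
  by rewrite trmx_mx4; mx4_field.
apply: (negP (not_hess4123 (g := bm *m s12) (gi := s12^T *m bp) _ _ _)).
- by rewrite det_mulmx det_s12 det_mx4_upper; ring.
- by rewrite /bm /bp /s12 trmx_mx4 mx4_1; mx4_ring.
- by rewrite /bm /s12 /minor1 mul_mx4 !mx4E /= (_ : _ - _ = 1) ?oner_eq0 //; ring.
have -> : (s12^T *m bp) *m X *m (bm *m s12) = - (- a22 *: (E o0 o0 - E o2 o2)).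
  rewrite /bm /bp /s12 e11 z33 z44 z41 z42 z31 z32 z43 z34 z21 z23 z24 !delta_mx4 /=.
  by rewrite trmx_mx4; mx4_field.
by rewrite rpredN -eD.
Qed.

Lemma hess4123_upper_absurd : False.
Proof.
have [_ _ _ k12 _] := hess4123_diag.
case: hess4123_diag_key => [k23|[z33 z44 nz22]]; last exact: hess4123_exceptional.
have row0 : a12 *: E o0 o3 + a13 *: E o0 o1 + a14 *: E o0 o2 - a12 *: E o0 o1
            - a13 *: E o0 o2 - a14 *: E o0 o3 \in H.
  have [nz|] := boolP [|| a12 != 0, a13 != 0 | a14 != 0].
    have [h01 h02 h03] := hess_row0_of_E10 hH (E10_of_4123 nz).
    by rewrite !rpredB ?rpredD ?rpredZ.
  rewrite !negb_or !negbK => /and3P [/eqP -> /eqP -> /eqP ->].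
  by rewrite !scale0r !subr0 !addr0 rpred0.
apply: (negP (not_hess4123 (g := s23) (gi := s23^T) det_s23 _ _)).
- by rewrite /s23 trmx_mx4 mx4_1; mx4_ring.
- by rewrite /minor2 /s23 !mx4E /= (_ : _ - _ = 1) ?oner_eq0 ?orbT //; ring.
have -> : s23^T *m X *m s23 = X + (a33 - a22) *: (E o1 o1 - E o2 o2)
    + (a44 - a22) *: (E o2 o2 - E o3 o3) + (a12 *: E o0 o3 + a13 *: E o0 o1 + a14 *: E o0 o2
    - a12 *: E o0 o1 - a13 *: E o0 o2 - a14 *: E o0 o3).
  rewrite /s23 z41 z42 z31 z32 z43 z34 z21 z23 z24 !delta_mx4 /=.
  by rewrite trmx_mx4; mx4_ring.
by apply: rpredD row0; apply: rpredD k23; apply: rpredD hess4123_X k12.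
Qed.

End UpperTriangular.

Lemma schubert4123_not_hessenberg : False.
Proof.
have E30 := negP no_E30_4123.
case: (eqVneq a41 0) => [z41|n]; last by apply/E30/E30_of_4123; rewrite n.
case: (eqVneq a42 0) => [z42|n]; last by apply/E30/E30_of_4123; rewrite n orbT.
case: (eqVneq a31 0) => [z31|n]; last by apply/E30/E30_of_4123; rewrite n !orbT.
case: (eqVneq a32 0) => [z32|n]; last by apply/E30/E30_of_4123; rewrite n !orbT.
case: (eqVneq a43 0) => [z43|n]; last by apply/E30/E30_of_4123; rewrite n !orbT.
case: (eqVneq a34 0) => [z34|n]; last by apply/E30/E30_of_4123; rewrite n !orbT.
have E20 := negP (no_E20_4123 z41 z42 z43).
case: (eqVneq a21 0) => [z21|n]; last by apply/E20/E20_of_4123; rewrite n.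
case: (eqVneq a23 0) => [z23|n]; last by apply/E20/E20_of_4123; rewrite n orbT.
case: (eqVneq a24 0) => [z24|n]; last by apply/E20/E20_of_4123; rewrite n !orbT.
exact: hess4123_upper_absurd.
Qed.

End Schubert4123.

Lemma oneline_nth (w : 'S_4) (i : 'I_4) : nth 0%N (oneline w) i = (val (w i)).+1.
Proof. by rewrite /oneline (nth_map o0) ?size_enum_ord // nth_ord_enum. Qed.

Lemma perm_matrix_inv_oneline (w : 'S_4) l (P : 'M4) : oneline w = l ->
  (forall i j : 'I_4, P i j = (nth 0%N l i == j.+1)%:R) -> perm_matrix (w^-1)%g = P.
Proof.
move=> <- hP; apply/matrixP => i j.
by rewrite mxE hP oneline_nth eqSS -[_ == j :> nat]/(w i == j) (canF_eq (permK w)).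
Qed.

Theorem lemma4p5 (w : 'S_4) :
  oneline w \in [:: [:: 4; 1; 2; 3]%N; [:: 2; 3; 4; 1]%N] ->
  ~ exists (x : 'M4) (H : {vspace 'M4}),
      in_sl x /\ hessenberg_space H /\
      (forall g : 'M4, in_hess x H g <-> in_schubert (w^-1)%g g).
Proof.
move=> hw [x [H [trx [hH hess_schubert]]]].
rewrite (mx4_eta x) in trx hess_schubert; rewrite /in_sl mxtrace_mx4 in trx.
move: hw; rewrite !inE => /orP [/eqP hw|/eqP hw].
- apply: (schubert2341_not_hessenberg _ hH trx hess_schubert).
  by apply: (perm_matrix_inv_oneline hw) => i j; rewrite mx4E; ord4 i; ord4 j.
- apply: (schubert4123_not_hessenberg _ hH trx hess_schubert).
  by apply: (perm_matrix_inv_oneline hw) => i j; rewrite mx4E; ord4 i; ord4 j.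
Qed.
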